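(* Let $M^2$ be a surface in $\mathbb E^4$ all of whose points are flat ($k=\varkappa=0$ everywhere) and whose second fundamental form $\sigma$ vanishes at no point. Then at every point the vectors $\sigma(X,Y)$, $X,Y\in T_pM^2$, span a line in the normal space; let $b$ be a unit normal vector field spanning this line and $l$ a unit normal vector field orthogonal to $b$. For an orthonormal tangent frame $\{x,y\}$ put $\beta_1=g(\nabla'_xb,l)$, $\beta_2=g(\nabla'_yb,l)$ and $\beta=\beta_1^2+\beta_2^2$ (which does not depend on the choice of orthonormal tangent frame). Then at each point of $M^2$ either the Gauss curvature $K$ vanishes or $\beta$ vanishes.
   Context: $\mathbb E^4$ carries the standard metric $g$ and flat Levi-Civita connection $\nabla'$. For a surface $M^2$ parametrized by $z(u,v)$, with $E=g(z_u,z_u)$, $F=g(z_u,z_v)$, $G=g(z_v,z_v)$, $W=\sqrt{EG-F^2}$, second fundamental form $\sigma$, and an orthonormal normal frame $\{e_1,e_2\}$, write $\sigma(z_u,z_u)=c_{11}^1e_1+c_{11}^2e_2$, $\sigma(z_u,z_v)=c_{12}^1e_1+c_{12}^2e_2$, $\sigma(z_v,z_v)=c_{22}^1e_1+c_{22}^2e_2$; put $\Delta_1=c_{11}^1c_{12}^2-c_{11}^2c_{12}^1$, $\Delta_2=c_{11}^1c_{22}^2-c_{11}^2c_{22}^1$, $\Delta_3=c_{12}^1c_{22}^2-c_{12}^2c_{22}^1$, $L=2\Delta_1/W$, $M=\Delta_2/W$, $N=2\Delta_3/W$, and $k=\frac{LN-M^2}{EG-F^2}$, $\varkappa=\frac{EN+GL-2FM}{2(EG-F^2)}$.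 A point is flat if $k=\varkappa=0$ there (equivalently $L=M=N=0$). *)

From Stdlib Require Import Reals.
Open Scope R_scope.

Record V4 := mkV { v0 : R; v1 : R; v2 : R; v3 : R }.

Definition vzero : V4 := mkV 0 0 0 0.
Definition vadd (a b : V4) : V4 :=
  mkV (v0 a + v0 b) (v1 a + v1 b) (v2 a + v2 b) (v3 a + v3 b).
Definition vscal (t : R) (a : V4) : V4 :=
  mkV (t * v0 a) (t * v1 a) (t * v2 a) (t * v3 a).
Definition vsub (a b : V4) : V4 := vadd a (vscal (-1) b).
Definition dot (a b : V4) : R :=
  v0 a * v0 b + v1 a * v1 b + v2 a * v2 b + v3 a * v3 b.

Definition has_pdu (f f' : R -> R -> V4) (u v : R) : Prop :=
  derivable_pt_lim (fun s => v0 (f s v)) u (v0 (f' u v)) /\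
  derivable_pt_lim (fun s => v1 (f s v)) u (v1 (f' u v)) /\
  derivable_pt_lim (fun s => v2 (f s v)) u (v2 (f' u v)) /\
  derivable_pt_lim (fun s => v3 (f s v)) u (v3 (f' u v)).

Definition has_pdv (f f' : R -> R -> V4) (u v : R) : Prop :=
  derivable_pt_lim (fun s => v0 (f u s)) v (v0 (f' u v)) /\
  derivable_pt_lim (fun s => v1 (f u s)) v (v1 (f' u v)) /\
  derivable_pt_lim (fun s => v2 (f u s)) v (v2 (f' u v)) /\
  derivable_pt_lim (fun s => v3 (f u s)) v (v3 (f' u v)).

Definition open2 (U : R -> R -> Prop) : Prop :=
  forall u v, U u v -> exists r, 0 < r /\
    forall u' v', (u' - u)^2 + (v' - v)^2 < r^2 -> U u' v'.

Definition cont_on2 (U : R -> R -> Prop) (f : R -> R -> V4) : Prop :=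
  forall u v, U u v -> forall eps, 0 < eps -> exists delta, 0 < delta /\
    forall u' v', U u' v' -> (u' - u)^2 + (v' - v)^2 < delta^2 ->
      dot (vsub (f u' v') (f u v)) (vsub (f u' v') (f u v)) < eps^2.

(** A smooth (C^infinity) parametrized surface piece z : U -> E^4.
    D i j is the mixed partial derivative  d^i/du^i d^j/dv^j z. *)
Definition smooth_param (U : R -> R -> Prop) (z : R -> R -> V4)
    (D : nat -> nat -> R -> R -> V4) : Prop :=
  open2 U /\
  (forall u v, U u v -> D 0%nat 0%nat u v = z u v) /\
  (forall i j u v, U u v ->
     has_pdu (D i j) (D (S i) j) u v /\ has_pdv (D i j) (D i (S j)) u v) /\
  (forall i j, cont_on2 U (D i j)).

Section Surface.
Variable D : nat -> nat -> R -> R -> V4.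
Variables u v : R.

Definition zu := D 1 0 u v.
Definition zv := D 0 1 u v.
Definition zuu := D 2 0 u v.
Definition zuv := D 1 1 u v.
Definition zvv := D 0 2 u v.

Definition E_ := dot zu zu.
Definition F_ := dot zu zv.
Definition G_ := dot zv zv.
Definition W2 := E_ * G_ - F_ ^ 2.
Definition W := sqrt W2.

Definition regular_at : Prop := 0 < W2.

Definition is_normal (w : V4) : Prop := dot w zu = 0 /\ dot w zv = 0.
Definition is_tangent_coef (a c : R) : V4 := vadd (vscal a zu) (vscal c zv).

(** normal component of a vector w at the point *)
Definition nor (w : V4) : V4 :=
  vsub w (vadd
    (vscal ((G_ * dot w zu - F_ * dot w zv) / W2) zu)
    (vscal ((E_ * dot w zv - F_ * dot w zu) / W2) zv)).

(** second fundamental form on coordinate vectors: sigma(X,Y) = (nabla'_X Y)^normal *)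
Definition s11 := nor zuu.
Definition s12 := nor zuv.
Definition s22 := nor zvv.

Definition kk (e1 e2 : V4) : R :=
  let c111 := dot s11 e1 in let c112 := dot s11 e2 in
  let c121 := dot s12 e1 in let c122 := dot s12 e2 in
  let c221 := dot s22 e1 in let c222 := dot s22 e2 in
  let D1 := c111 * c122 - c112 * c121 in
  let D2 := c111 * c222 - c112 * c221 in
  let D3 := c121 * c222 - c122 * c221 in
  let L := 2 * D1 / W in let M := D2 / W in let N := 2 * D3 / W in
  (L * N - M ^ 2) / W2.

Definition varkappa (e1 e2 : V4) : R :=
  let c111 := dot s11 e1 in let c112 := dot s11 e2 in
  let c121 := dot s12 e1 in let c122 := dot s12 e2 in
  let c221 := dot s22 e1 in let c222 := dot s22 e2 in
  let D1 := c111 * c122 - c112 * c121 in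
  let D2 := c111 * c222 - c112 * c221 in
  let D3 := c121 * c222 - c122 * c221 in
  let L := 2 * D1 / W in let M := D2 / W in let N := 2 * D3 / W in
  (E_ * N + G_ * L - 2 * F_ * M) / (2 * W2).

Definition orthonormal_normal_frame (e1 e2 : V4) : Prop :=
  is_normal e1 /\ is_normal e2 /\
  dot e1 e1 = 1 /\ dot e2 e2 = 1 /\ dot e1 e2 = 0.

Definition flat_point : Prop :=
  forall e1 e2, orthonormal_normal_frame e1 e2 ->
    kk e1 e2 = 0 /\ varkappa e1 e2 = 0.

Definition sigma_nonzero : Prop :=
  ~ (s11 = vzero /\ s12 = vzero /\ s22 = vzero).

(** Gauss curvature, via the Gauss equation of the flat ambient space E^4:
    K = (g(sigma(z_u,z_u),sigma(z_v,z_v)) - g(sigma(z_u,z_v),sigma(z_u,z_v)))/(EG-F^2) *)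
Definition gaussK : R := (dot s11 s22 - dot s12 s12) / W2.

End Surface.

(* Let H_ij = g(z_ij, b) and let l0 be the unit normal l at a
   fixed point p.  Since sigma takes values in the line spanned by b, each
   second derivative splits near p as
       z_ij = al z_u + ga z_v + H_ij b,                                  (1)
   with coefficients al, ga, H_ij that are differentiable functions.  At p the
   vectors z_u, z_v, b are orthogonal to l0; so differentiating g(z_ij, l0)
   along a coordinate line only the derivative of the factor b survives
   (a Leibniz rule at a common zero), giving the Codazzi-type relations
       g(z_iju, l0) = H_ij g(b_u, l0),   g(z_ijv, l0) = H_ij g(b_v, l0).
   Equality of the mixed third derivatives then yields
       H12 pu = H11 pv  and  H22 pu = H12 pv   (pu = g(b_u,l0), pv = g(b_v,l0)),
   hence (H11 H22 - H12^2) pu = (H11 H22 - H12^2) pv = 0.  By the Gauss equation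
   K = (H11 H22 - H12^2)/W^2, so either K = 0 or pu = pv = 0, and then
   beta1 = a1 pu + c1 pv and beta2 = a2 pu + c2 pv vanish.
   Flatness and the non-vanishing of sigma only serve (in the paper) to
   produce the field b. *)

From Stdlib Require Import Reals Lra Lia.
Open Scope R_scope.

Lemma V4_ext (a c : V4) :
  v0 a = v0 c -> v1 a = v1 c -> v2 a = v2 c -> v3 a = v3 c -> a = c.
Proof. destruct a, c; simpl; intros; subst; reflexivity. Qed.

Lemma dot_comm (a c : V4) : dot a c = dot c a.
Proof. unfold dot; ring. Qed.

Lemma dot_scal (s t : R) (a c : V4) : dot (vscal s a) (vscal t c) = s * t * dot a c.
Proof. unfold dot, vscal; simpl; ring. Qed.

Lemma dot_comb2 (a c : R) (p q lv : V4) :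
  dot (vadd (vscal a p) (vscal c q)) lv = a * dot p lv + c * dot q lv.
Proof. unfold dot, vadd, vscal; simpl; ring. Qed.

Lemma dot_comb3 (a c e : R) (p q w lv : V4) :
  dot (vadd (vscal a p) (vadd (vscal c q) (vscal e w))) lv =
  a * dot p lv + c * dot q lv + e * dot w lv.
Proof. unfold dot, vadd, vscal; simpl; ring. Qed.

Definition gram (zu zv : V4) : R := dot zu zu * dot zv zv - dot zu zv ^ 2.
Definition tcoef_u (zu zv w : V4) : R :=
  (dot zv zv * dot w zu - dot zu zv * dot w zv) / gram zu zv.
Definition tcoef_v (zu zv w : V4) : R :=
  (dot zu zu * dot w zv - dot zu zv * dot w zu) / gram zu zv.

Definition normal_part (zu zv w : V4) : V4 :=
  vsub w (vadd (vscal (tcoef_u zu zv w) zu) (vscal (tcoef_v zu zv w) zv)).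

Lemma nor_normal_part (D : nat -> nat -> R -> R -> V4) (u v : R) (w : V4) :
  nor D u v w = normal_part (zu D u v) (zv D u v) w.
Proof. reflexivity. Qed.

Lemma decomposition_along_unit_normal (zu zv w bb : V4) (t : R) :
  dot bb zu = 0 -> dot bb zv = 0 -> dot bb bb = 1 ->
  normal_part zu zv w = vscal t bb ->
  t = dot w bb /\
  w = vadd (vscal (tcoef_u zu zv w) zu)
        (vadd (vscal (tcoef_v zu zv w) zv) (vscal (dot w bb) bb)).
Proof.
  intros Nu Nv Nb Hn.
  set (al := tcoef_u zu zv w) in *. set (ga := tcoef_v zu zv w) in *.
  assert (Hw : w = vadd (vscal al zu) (vadd (vscal ga zv) (vscal t bb))).
  { unfold normal_part in Hn; fold al ga in Hn.
    destruct w, bb, zu, zv; unfold vsub, vadd, vscal in *; simpl in *.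
    injection Hn; intros; apply V4_ext; simpl; lra. }
  assert (Ht : t = dot w bb).
  { rewrite Hw, dot_comb3, (dot_comm zu), (dot_comm zv), Nu, Nv, Nb. ring. }
  split; [exact Ht | rewrite <- Ht; exact Hw].
Qed.

Definition differentiable_at (f : R -> R) (x : R) : Prop :=
  exists l, derivable_pt_lim f x l.

Definition vderiv (A : R -> V4) (x : R) (A' : V4) : Prop :=
  derivable_pt_lim (fun s => v0 (A s)) x (v0 A') /\
  derivable_pt_lim (fun s => v1 (A s)) x (v1 A') /\
  derivable_pt_lim (fun s => v2 (A s)) x (v2 A') /\
  derivable_pt_lim (fun s => v3 (A s)) x (v3 A').

Lemma differentiable_minus (f g : R -> R) (x : R) :
  differentiable_at f x -> differentiable_at g x ->
  differentiable_at (fun s => f s - g s) x.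
Proof. intros [lf Hf] [lg Hg]. exists (lf - lg). exact (derivable_pt_lim_minus f g x lf lg Hf Hg). Qed.

Lemma differentiable_mult (f g : R -> R) (x : R) :
  differentiable_at f x -> differentiable_at g x ->
  differentiable_at (fun s => f s * g s) x.
Proof. intros [lf Hf] [lg Hg]. eexists. exact (derivable_pt_lim_mult f g x lf lg Hf Hg). Qed.

Lemma differentiable_div (f g : R -> R) (x : R) :
  differentiable_at f x -> differentiable_at g x -> g x <> 0 ->
  differentiable_at (fun s => f s / g s) x.
Proof. intros [lf Hf] [lg Hg] Hgx. eexists. exact (derivable_pt_lim_div f g x lf lg Hf Hg Hgx). Qed.

Lemma differentiable_sqr (f : R -> R) (x : R) :
  differentiable_at f x -> differentiable_at (fun s => f s ^ 2) x.
Proof.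
  intros [lf Hf]. eexists.
  exact (derivable_pt_lim_comp f (fun y => y ^ 2) x lf _ Hf (derivable_pt_lim_pow (f x) 2)).
Qed.

Lemma dot_deriv (A B : R -> V4) (x : R) (A' B' : V4) :
  vderiv A x A' -> vderiv B x B' ->
  derivable_pt_lim (fun s => dot (A s) (B s)) x (dot A' (B x) + dot (A x) B').
Proof.
  intros [A0 [A1 [A2 A3]]] [B0 [B1 [B2 B3]]]. unfold dot.
  replace (_ + _) with
    ((v0 A' * v0 (B x) + v0 (A x) * v0 B') + (v1 A' * v1 (B x) + v1 (A x) * v1 B')
     + (v2 A' * v2 (B x) + v2 (A x) * v2 B') + (v3 A' * v3 (B x) + v3 (A x) * v3 B'))
    by ring.
  repeat apply (derivable_pt_lim_plus (fun s => _) (fun s => _));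
    apply derivable_pt_lim_mult; assumption.
Qed.

Lemma dot_deriv_const (A : R -> V4) (x : R) (A' c : V4) :
  vderiv A x A' -> derivable_pt_lim (fun s => dot (A s) c) x (dot A' c).
Proof.
  intros HA.
  assert (Hc : vderiv (fun _ => c) x vzero) by
    (repeat split; apply derivable_pt_lim_const).
  replace (dot A' c) with (dot A' c + dot (A x) vzero) by (unfold dot; simpl; ring).
  exact (dot_deriv A (fun _ => c) x A' vzero HA Hc).
Qed.

Lemma differentiable_dot (A B : R -> V4) (x : R) (A' B' : V4) :
  vderiv A x A' -> vderiv B x B' -> differentiable_at (fun s => dot (A s) (B s)) x.
Proof. intros HA HB. eexists. exact (dot_deriv A B x A' B' HA HB). Qed.

Lemma tcoefs_differentiable (ZU ZV Wf : R -> V4) (x : R) (ZU' ZV' W' : V4) :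
  vderiv ZU x ZU' -> vderiv ZV x ZV' -> vderiv Wf x W' -> gram (ZU x) (ZV x) <> 0 ->
  differentiable_at (fun s => tcoef_u (ZU s) (ZV s) (Wf s)) x /\
  differentiable_at (fun s => tcoef_v (ZU s) (ZV s) (Wf s)) x.
Proof.
  intros DU DV DW Hg.
  assert (Gr : differentiable_at (fun s => gram (ZU s) (ZV s)) x).
  { unfold gram. apply differentiable_minus; [apply differentiable_mult|apply differentiable_sqr];
      eapply differentiable_dot; eassumption. }
  unfold tcoef_u, tcoef_v; split; apply differentiable_div; try exact Gr; try exact Hg;
    apply differentiable_minus; apply differentiable_mult; eapply differentiable_dot; eassumption.
Qed.

Lemma derivable_pt_lim_local (f g : R -> R) (x r l : R) :
  0 < r -> (forall s, Rabs (s - x) < r -> f s = g s) ->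
  derivable_pt_lim g x l -> derivable_pt_lim f x l.
Proof.
  intros Hr Hfg Hg eps He. destruct (Hg eps He) as [del Hd].
  assert (Hm : 0 < Rmin del r) by (apply Rmin_glb_lt; [apply cond_pos | lra]).
  exists (mkposreal _ Hm). intros h Hh0 Hh. simpl in Hh.
  rewrite (Hfg (x + h)), (Hfg x).
  - apply Hd; [exact Hh0 | apply Rlt_le_trans with (1 := Hh); apply Rmin_l].
  - replace (x - x) with 0 by ring. rewrite Rabs_R0; lra.
  - replace (x + h - x) with h by ring. apply Rlt_le_trans with (1 := Hh); apply Rmin_r.
Qed.

Lemma derivable_pt_lim_mult_at_zero (g k : R -> R) (x dk : R) :
  differentiable_at g x -> derivable_pt_lim k x dk -> k x = 0 ->
  derivable_pt_lim (fun s => g s * k s) x (g x * dk).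
Proof.
  intros [dg Hg] Hk Hk0.
  replace (g x * dk) with (dg * k x + g x * dk) by (rewrite Hk0; ring).
  exact (derivable_pt_lim_mult g k x dg dk Hg Hk).
Qed.

Lemma leibniz_at_orthogonal (ZU ZV B Wf : R -> V4) (al ga h : R -> R)
    (ZU' ZV' B' W' lv : V4) (x r : R) :
  0 < r ->
  (forall s, Rabs (s - x) < r ->
     Wf s = vadd (vscal (al s) (ZU s)) (vadd (vscal (ga s) (ZV s)) (vscal (h s) (B s)))) ->
  vderiv ZU x ZU' -> vderiv ZV x ZV' -> vderiv B x B' -> vderiv Wf x W' ->
  differentiable_at al x -> differentiable_at ga x -> differentiable_at h x ->
  dot (ZU x) lv = 0 -> dot (ZV x) lv = 0 -> dot (B x) lv = 0 ->
  dot W' lv = al x * dot ZU' lv + ga x * dot ZV' lv + h x * dot B' lv.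
Proof.
  intros Hr Hloc DU DV DB DW Hal Hga Hh Ou Ov Ob.
  apply (uniqueness_limite (fun s => dot (Wf s) lv) x); [exact (dot_deriv_const Wf x W' lv DW) |].
  apply (derivable_pt_lim_local _
    (fun s => al s * dot (ZU s) lv + ga s * dot (ZV s) lv + h s * dot (B s) lv) x r _ Hr).
  - intros s Hs. rewrite (Hloc s Hs). apply dot_comb3.
  - repeat apply (derivable_pt_lim_plus (fun s => _) (fun s => _));
      apply derivable_pt_lim_mult_at_zero; try assumption; apply dot_deriv_const; assumption.
Qed.

Section SecondFormAlongB.

Variables (U : R -> R -> Prop) (z : R -> R -> V4) (D : nat -> nat -> R -> R -> V4)
          (b bu bv : R -> R -> V4).

Hypothesis smooth : smooth_param U z D.
Hypothesis regular : forall u v, U u v -> regular_at D u v.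
Hypothesis b_derivs : forall u v, U u v -> has_pdu b bu u v /\ has_pdv b bv u v.
Hypothesis b_spans_sigma : forall u v, U u v ->
  is_normal D u v (b u v) /\ dot (b u v) (b u v) = 1 /\
  (exists t, s11 D u v = vscal t (b u v)) /\
  (exists t, s12 D u v = vscal t (b u v)) /\
  (exists t, s22 D u v = vscal t (b u v)).

Lemma gram_nonzero (u v : R) : U u v -> gram (D 1%nat 0%nat u v) (D 0%nat 1%nat u v) <> 0.
Proof.
  intros Huv. generalize (regular u v Huv).
  unfold regular_at, W2, E_, F_, G_, zu, zv, gram. lra.
Qed.

Lemma sigma_along_b (i j : nat) (s t : R) : (i + j = 2)%nat -> U s t ->
  exists c, normal_part (D 1%nat 0%nat s t) (D 0%nat 1%nat s t) (D i j s t) = vscal c (b s t).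
Proof.
  intros Hij Hst. destruct (b_spans_sigma s t Hst) as [_ [_ [S11 [S12 S22]]]].
  destruct i as [|[|[|i]]]; destruct j as [|[|[|j]]]; try lia; assumption.
Qed.

Lemma second_derivative_decomposition (i j : nat) (s t : R) : (i + j = 2)%nat -> U s t ->
  let zu := D 1%nat 0%nat s t in let zv := D 0%nat 1%nat s t in let w := D i j s t in
  w = vadd (vscal (tcoef_u zu zv w) zu)
        (vadd (vscal (tcoef_v zu zv w) zv) (vscal (dot w (b s t)) (b s t))).
Proof.
  intros Hij Hst zu zv w. destruct (sigma_along_b i j s t Hij Hst) as [c Hc].
  destruct (b_spans_sigma s t Hst) as [[Nu Nv] [Nb _]].
  exact (proj2 (decomposition_along_unit_normal zu zv w (b s t) c Nu Nv Nb Hc)).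
Qed.

Lemma second_derivative_perp (i j : nat) (u v : R) (l0 : V4) : (i + j = 2)%nat -> U u v ->
  dot (D 1%nat 0%nat u v) l0 = 0 -> dot (D 0%nat 1%nat u v) l0 = 0 -> dot (b u v) l0 = 0 ->
  dot (D i j u v) l0 = 0.
Proof.
  intros Hij Huv Ou Ov Ob.
  rewrite (second_derivative_decomposition i j u v Hij Huv), dot_comb3, Ou, Ov, Ob. ring.
Qed.

Lemma gaussK_along_b (u v : R) : U u v ->
  gaussK D u v =
  (dot (D 2%nat 0%nat u v) (b u v) * dot (D 0%nat 2%nat u v) (b u v)
   - dot (D 1%nat 1%nat u v) (b u v) ^ 2) / W2 D u v.
Proof.
  intros Huv. destruct (b_spans_sigma u v Huv) as [[Nu Nv] [Nb _]].
  assert (Hs : forall i j, (i + j = 2)%nat ->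
            nor D u v (D i j u v) = vscal (dot (D i j u v) (b u v)) (b u v)).
  { intros i j Hij. destruct (sigma_along_b i j u v Hij Huv) as [c Hc].
    rewrite nor_normal_part. unfold zu, zv.
    rewrite Hc, <- (proj1 (decomposition_along_unit_normal _ _ _ _ c Nu Nv Nb Hc)).
    reflexivity. }
  unfold gaussK, s11, s12, s22, zuu, zuv, zvv.
  rewrite (Hs 2%nat 0%nat), (Hs 1%nat 1%nat), (Hs 0%nat 2%nat), !dot_scal, Nb by reflexivity.
  unfold Rdiv; ring.
Qed.

Lemma codazzi_u (i j : nat) (u v : R) (l0 : V4) : (i + j = 2)%nat -> U u v ->
  dot (D 1%nat 0%nat u v) l0 = 0 -> dot (D 0%nat 1%nat u v) l0 = 0 -> dot (b u v) l0 = 0 ->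
  dot (D (S i) j u v) l0 = dot (D i j u v) (b u v) * dot (bu u v) l0.
Proof.
  intros Hij Huv Ou Ov Ob.
  destruct smooth as [Hopen [_ [HD _]]].
  destruct (Hopen u v Huv) as [r [Hr Hball]].
  assert (Near : forall s, Rabs (s - u) < r -> U s v).
  { intros s Hs. apply Hball. apply Rabs_def2 in Hs. nra. }
  assert (Dw := proj1 (HD i j u v Huv)).
  destruct (tcoefs_differentiable (fun s => D 1%nat 0%nat s v) (fun s => D 0%nat 1%nat s v)
              (fun s => D i j s v) u _ _ _ (proj1 (HD 1%nat 0%nat u v Huv))
              (proj1 (HD 0%nat 1%nat u v Huv)) Dw (gram_nonzero u v Huv)) as [Hal Hga].
  rewrite (leibniz_at_orthogonal _ _ (fun s => b s v) _ _ _ (fun s => dot (D i j s v) (b s v))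
             _ _ _ _ l0 u r Hr
             (fun s Hs => second_derivative_decomposition i j s v Hij (Near s Hs))
             (proj1 (HD 1%nat 0%nat u v Huv)) (proj1 (HD 0%nat 1%nat u v Huv))
             (proj1 (b_derivs u v Huv)) Dw Hal Hga
             (differentiable_dot _ _ u _ _ Dw (proj1 (b_derivs u v Huv))) Ou Ov Ob).
  rewrite (second_derivative_perp 2 0 u v l0), (second_derivative_perp 1 1 u v l0);
    trivial; ring.
Qed.

Lemma codazzi_v (i j : nat) (u v : R) (l0 : V4) : (i + j = 2)%nat -> U u v ->
  dot (D 1%nat 0%nat u v) l0 = 0 -> dot (D 0%nat 1%nat u v) l0 = 0 -> dot (b u v) l0 = 0 ->
  dot (D i (S j) u v) l0 = dot (D i j u v) (b u v) * dot (bv u v) l0.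
Proof.
  intros Hij Huv Ou Ov Ob.
  destruct smooth as [Hopen [_ [HD _]]].
  destruct (Hopen u v Huv) as [r [Hr Hball]].
  assert (Near : forall s, Rabs (s - v) < r -> U u s).
  { intros s Hs. apply Hball. apply Rabs_def2 in Hs. nra. }
  assert (Dw := proj2 (HD i j u v Huv)).
  destruct (tcoefs_differentiable (fun s => D 1%nat 0%nat u s) (fun s => D 0%nat 1%nat u s)
              (fun s => D i j u s) v _ _ _ (proj2 (HD 1%nat 0%nat u v Huv))
              (proj2 (HD 0%nat 1%nat u v Huv)) Dw (gram_nonzero u v Huv)) as [Hal Hga].
  rewrite (leibniz_at_orthogonal _ _ (fun s => b u s) _ _ _ (fun s => dot (D i j u s) (b u s))
             _ _ _ _ l0 v r Hr
             (fun s Hs => second_derivative_decomposition i j u s Hij (Near s Hs))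
             (proj2 (HD 1%nat 0%nat u v Huv)) (proj2 (HD 0%nat 1%nat u v Huv))
             (proj2 (b_derivs u v Huv)) Dw Hal Hga
             (differentiable_dot _ _ v _ _ Dw (proj2 (b_derivs u v Huv))) Ou Ov Ob).
  rewrite (second_derivative_perp 1 1 u v l0), (second_derivative_perp 0 2 u v l0);
    trivial; ring.
Qed.

End SecondFormAlongB.

Lemma codazzi_dichotomy (h11 h12 h22 p q : R) :
  h12 * p = h11 * q -> h22 * p = h12 * q ->
  h11 * h22 - h12 ^ 2 = 0 \/ (p = 0 /\ q = 0).
Proof.
  intros E1 E2.
  destruct (Req_dec (h11 * h22 - h12 ^ 2) 0) as [Hz | Hz]; [left; exact Hz | right].
  assert (Hp : (h11 * h22 - h12 ^ 2) * p = 0).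
  { replace ((h11 * h22 - h12 ^ 2) * p) with (h11 * (h22 * p) - h12 * (h12 * p)) by ring.
    rewrite E1, E2; ring. }
  assert (Hq : (h11 * h22 - h12 ^ 2) * q = 0).
  { replace ((h11 * h22 - h12 ^ 2) * q) with (h22 * (h11 * q) - h12 * (h12 * q)) by ring.
    rewrite <- E1, <- E2; ring. }
  split; [destruct (Rmult_integral _ _ Hp) | destruct (Rmult_integral _ _ Hq)]; tauto.
Qed.

Theorem mainTheorem4
  (U : R -> R -> Prop) (z : R -> R -> V4) (D : nat -> nat -> R -> R -> V4)
  (b bu bv l : R -> R -> V4) :
  smooth_param U z D ->
  (forall u v, U u v -> regular_at D u v) ->
  (forall u v, U u v -> flat_point D u v) ->
  (forall u v, U u v -> sigma_nonzero D u v) ->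
  (forall u v, U u v -> has_pdu b bu u v /\ has_pdv b bv u v) ->
  (forall u v, U u v ->
     is_normal D u v (b u v) /\ dot (b u v) (b u v) = 1 /\
     (exists t, s11 D u v = vscal t (b u v)) /\
     (exists t, s12 D u v = vscal t (b u v)) /\
     (exists t, s22 D u v = vscal t (b u v))) ->
  (forall u v, U u v ->
     is_normal D u v (l u v) /\ dot (l u v) (l u v) = 1 /\ dot (b u v) (l u v) = 0) ->
  forall u v, U u v ->
  forall a1 c1 a2 c2,
    let x := is_tangent_coef D u v a1 c1 in
    let y := is_tangent_coef D u v a2 c2 in
    dot x x = 1 -> dot y y = 1 -> dot x y = 0 ->
    let beta1 := dot (vadd (vscal a1 (bu u v)) (vscal c1 (bv u v))) (l u v) in
    let beta2 := dot (vadd (vscal a2 (bu u v)) (vscal c2 (bv u v))) (l u v) in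
    gaussK D u v = 0 \/ beta1 ^ 2 + beta2 ^ 2 = 0.
Proof.
  intros Hsm Hreg _ _ Hbd Hb Hl u v Huv a1 c1 a2 c2 x y _ _ _ beta1 beta2.
  destruct (Hl u v Huv) as [[Lu Lv] [_ Lb]].
  rewrite dot_comm in Lu, Lv.
  pose proof (codazzi_u U z D b bu bv Hsm Hreg Hbd Hb) as Cu.
  pose proof (codazzi_v U z D b bu bv Hsm Hreg Hbd Hb) as Cv.
  (* z_uuv and z_uvv computed along both coordinate directions *)
  assert (E1 := eq_trans (eq_sym (Cu 1%nat 1%nat u v (l u v) eq_refl Huv Lu Lv Lb))
                         (Cv 2%nat 0%nat u v (l u v) eq_refl Huv Lu Lv Lb)).
  assert (E2 := eq_trans (eq_sym (Cu 0%nat 2%nat u v (l u v) eq_refl Huv Lu Lv Lb))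
                         (Cv 1%nat 1%nat u v (l u v) eq_refl Huv Lu Lv Lb)).
  rewrite (gaussK_along_b U D b Hb u v Huv).
  destruct (codazzi_dichotomy _ _ _ _ _ E1 E2) as [HK | [Pu Pv]].
  - left. rewrite HK. unfold Rdiv; ring.
  - right. unfold beta1, beta2. rewrite !dot_comb2, Pu, Pv. ring.
Qed.
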